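(* Let $G$ be a $d$-regular graph on $n$ vertices and let $k$ be a positive integer with $NPO(k)\le n< NPO(k+1)$. Then the Laplacian matrix $L(G)$ has at least $k$ eigenvalues (counted with multiplicity) that are greater than or equal to $d$.
   Context: All graphs are finite, simple, unweighted and undirected; $A(G)$ is the adjacency matrix and $L(G)=D(G)-A(G)$ the Laplacian, where $D(G)$ is the diagonal matrix of degrees. For a positive integer $k$, $NPO(k)$ is the smallest integer $n$ such that the adjacency matrix of every graph with at least $n$ vertices has at least $k$ nonpositive eigenvalues (counted with multiplicity). *)

(* Eigenvalues are taken in algC (algebraic complex numbers),
   as roots (with multiplicity) of the characteristic polynomial. *)
From HB Require Import structures.
From mathcomp Require Import all_boot all_order all_algebra all_field.
Set Implicit Arguments. Unset Strict Implicit. Unset Printing Implicit Defensive.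
Import Order.TTheory GRing.Theory Num.Theory.
Local Open Scope ring_scope.

Definition simple_graph (n : nat) (e : rel 'I_n) : Prop :=
  symmetric e /\ irreflexive e.

Definition deg (n : nat) (e : rel 'I_n) (i : 'I_n) : nat := #|[set j | e i j]|.

Definition regular (n : nat) (e : rel 'I_n) (d : nat) : Prop :=
  forall i : 'I_n, deg e i = d.

Definition adjmx (n : nat) (e : rel 'I_n) : 'M[algC]_n :=
  \matrix_(i, j) (e i j)%:R.

Definition degmx (n : nat) (e : rel 'I_n) : 'M[algC]_n :=
  \matrix_(i, j) ((i == j)%:R * (deg e i)%:R).

Definition laplacian (n : nat) (e : rel 'I_n) : 'M[algC]_n :=
  degmx e - adjmx e.

Definition at_least_eigs (n : nat) (M : 'M[algC]_n) (P : pred algC) (k : nat)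
  : Prop :=
  exists rs : seq algC,
    char_poly M = \prod_(z <- rs) ('X - z%:P) /\ (k <= count P rs)%N.

Definition npo_prop (k m : nat) : Prop :=
  forall (N : nat) (e : rel 'I_N), (m <= N)%N -> simple_graph e ->
    at_least_eigs (adjmx e) (fun x => x <= 0) k.

Definition is_NPO (k m : nat) : Prop :=
  npo_prop k m /\ forall m' : nat, npo_prop k m' -> (m <= m')%N.

From HB Require Import structures.
From mathcomp Require Import all_boot all_order all_algebra all_field.
From mathcomp Require Import ring.
Import Order.TTheory GRing.Theory Num.Theory.
Local Open Scope ring_scope.

(* For a d-regular graph the Laplacian is L = d I - A.  The
   spectrum of c I - A is the image of the spectrum of A under z |-> c - z,
   multiplicities included: substituting c - X into the characteristic
   polynomial of A gives, up to the sign (-1)^n, that of c I - A.  Since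
   a = NPO(k) <= n, the adjacency matrix A has at least k eigenvalues z <= 0,
   and these are sent to at least k eigenvalues d - z >= d of L.  (Only the
   lower bound NPO(k) <= n is needed; the upper bound n < NPO(k+1) is not.) *)

Lemma char_poly_scalar_sub (R : comNzRingType) (n : nat) (c : R)
    (A : 'M[R]_n) :
  char_poly (c%:M - A) = (- 1) ^+ n * (char_poly A \Po (c%:P - 'X)).
Proof.
rewrite /char_poly -det_map_mx -detZ; congr (\det _).
apply/matrixP => i j; rewrite !mxE /=.
case: (i == j); rewrite /= ?mulr1n ?mulr0n comp_polyB;
  rewrite ?comp_polyX ?comp_polyC ?comp_poly0 ?polyCB ?polyC0; ring.
Qed.

Lemma prod_XsubC_comp_sub (R : comNzRingType) (c : R) (rs : seq R) :
  (\prod_(z <- rs) ('X - z%:P)) \Po (c%:P - 'X)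
    = (- 1) ^+ size rs * \prod_(z <- map (fun z => c - z) rs) ('X - z%:P).
Proof.
elim: rs => [|z s IH]; first by rewrite !big_nil comp_polyC mulr1.
rewrite !big_cons rmorphM /= IH exprS.
have -> : ('X - z%:P) \Po (c%:P - 'X) = - ('X - (c - z)%:P).
  by rewrite comp_polyB comp_polyX comp_polyC polyCB; ring.
ring.
Qed.

Lemma at_least_eigs_scalar_sub {n : nat} (c : algC) {A : 'M[algC]_n}
    {P : pred algC} {k : nat} :
  at_least_eigs A P k -> at_least_eigs (c%:M - A) (fun x => P (c - x)) k.
Proof.
move=> [rs [chA Pk]]; exists (map (fun z => c - z) rs); split.
  have size_rs : size rs = n.
    by have := size_char_poly A; rewrite chA size_prod_XsubC => -[].
  rewrite char_poly_scalar_sub chA prod_XsubC_comp_sub size_rs.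
  by rewrite mulrA -exprMn mulrNN mulr1 expr1n mul1r.
rewrite count_map (eq_count (a2 := P)) // => z /=.
by rewrite opprB addrC subrK.
Qed.

Lemma laplacian_regular {n d : nat} {e : rel 'I_n} :
  regular e d -> laplacian e = (d%:R : algC)%:M - adjmx e.
Proof.
move=> reg; rewrite /laplacian; congr (_ - _).
apply/matrixP => i j; rewrite !mxE reg.
by case: (i == j); rewrite ?mul1r ?mul0r.
Qed.

Theorem mainTheorem18 (n d k a b : nat) (e : rel 'I_n) :
  simple_graph e -> regular e d -> (0 < k)%N ->
  is_NPO k a -> is_NPO k.+1 b -> (a <= n)%N -> (n < b)%N ->
  at_least_eigs (laplacian e) (fun x => d%:R <= x) k.
Proof.
move=> simple reg _ [npo_a _] _ a_le_n _.
have nonpos_eigs : at_least_eigs (adjmx e) (fun x => x <= 0) k.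
  exact: npo_a n e a_le_n simple.
rewrite (laplacian_regular reg).
have [rs [chL Pk]] := at_least_eigs_scalar_sub (d%:R : algC) nonpos_eigs.
exists rs; split=> //; congr (_ <= _)%N : Pk; apply: eq_count => x /=.
by rewrite subr_le0.
Qed.
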